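(* There is a constant $c$ such that for every $n\in\mathbb N$ and every $n$-ary Boolean function $f:\mathbb B^n\to\mathbb B$ there exists an instruction sequence $X\in\mathrm{IS}^{na}_{br}$ in which no jump instruction occurs such that $X$ computes $f$ and $|X|\le c\cdot(n+1)\cdot 2^n$.
   Context: $\mathbb B=\{T,F\}$. A primitive instruction is one of: a plain basic instruction $a$, a positive test instruction $+a$, a negative test instruction $-a$ (for a basic instruction $a$), a forward jump instruction $\#l$ ($l\in\mathbb N$), or the termination instruction $!$. An instruction sequence is a finite nonempty sequence $X=u_1;\dots;u_k$ of primitive instructions; its length is $|X|=k$. Basic instructions have the form $f.m$ where the focus $f$ is one of $\mathrm{in}{:}i$, $\mathrm{aux}{:}i$ ($i\ge 1$) or $\mathrm{out}$, each naming a Boolean register, and the method $m$ is one of $\mathrm{set}{:}T$, $\mathrm{set}{:}F$, $\mathrm{get}$. Executing $f.\mathrm{set}{:}b$ sets register $f$ to $b$ and yields reply $b$; executing $f.\mathrm{get}$ leaves the register unchanged and yields its content as reply. Execution of $X=u_1;\dots;u_k$: a counter starts at $1$. If the counter exceeds $k$, execution deadlocks. At position $i$: if $u_i=!$, execution terminates; if $u_i=\#l$, execution deadlocks if $l=0$ and otherwise the counter becomes $i+l$; if $u_i$ is $a$, $+a$ or $-a$, the basic instruction $a$ is executed yielding reply $r$, and the counter becomes $i+1$ for $u_i=a$; for $u_i=+a$ it becomes $i+1$ if $r=T$ and $i+2$ if $r=F$; for $u_i=-a$ it becomes $i+1$ if $r=F$ and $i+2$ if $r=T$. $\mathrm{IS}_{br}$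 is the set of instruction sequences in which every basic instruction occurring belongs to $\{f.\mathrm{get}: f=\mathrm{in}{:}i \text{ or } f=\mathrm{aux}{:}i\}\cup\{f.\mathrm{set}{:}b: f=\mathrm{aux}{:}i \text{ or } f=\mathrm{out},\ b\in\mathbb B\}$. $\mathrm{IS}^{na}_{br}\subseteq \mathrm{IS}_{br}$ is the set of those in which every basic instruction belongs to $\{\mathrm{in}{:}i.\mathrm{get}: i\ge1\}\cup\{\mathrm{out}.\mathrm{set}{:}T,\mathrm{out}.\mathrm{set}{:}F\}$. $X\in\mathrm{IS}_{br}$ computes $f:\mathbb B^n\to\mathbb B$ if for every $(b_1,\dots,b_n)\in\mathbb B^n$: when $X$ is executed with register $\mathrm{in}{:}j$ initialised to $b_j$ ($j\le n$) and all registers $\mathrm{aux}{:}i$ and $\mathrm{out}$ initialised to $F$, execution terminates (does not deadlock) without ever executing a basic instruction with focus $\mathrm{in}{:}j$ for $j>n$, and at termination register $\mathrm{out}$ contains $f(b_1,\dots,b_n)$. *)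

From mathcomp Require Import all_boot.
Set Implicit Arguments. Unset Strict Implicit. Unset Printing Implicit Defensive.

(* Foci: in:i, aux:i (i >= 1, enforced by the IS_br predicates), out. *)
Inductive focus := FIn of nat | FAux of nat | FOut.
Inductive method := MSet of bool | MGet.
Record basic := Basic { bfocus : focus; bmethod : method }.

Inductive instr :=
  | IPlain of basic
  | IPos of basic
  | INeg of basic
  | IJump of nat
  | ITerm.

(* An instruction sequence: a finite nonempty list; |X| = size X. *)
Definition instr_seq := seq instr.
Definition nonempty_is (X : instr_seq) : Prop := X <> [::].

Record state := State { rin : nat -> bool; raux : nat -> bool; rout : bool }.

Definition exec_basic (a : basic) (s : state) : state * bool :=
  match bfocus a, bmethod a with
  | FIn i, MSet b => (State (fun j => if j == i then b else rin s j) (raux s) (rout s), b)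
  | FIn i, MGet => (s, rin s i)
  | FAux i, MSet b => (State (rin s) (fun j => if j == i then b else raux s j) (rout s), b)
  | FAux i, MGet => (s, raux s i)
  | FOut, MSet b => (State (rin s) (raux s) b, b)
  | FOut, MGet => (s, rout s)
  end.

Definition allowed (n : nat) (a : basic) : Prop :=
  match bfocus a with FIn j => j <= n | _ => True end.

(* Instruction at (1-based) position i, None if the counter is out of range *)
Definition fetch (X : instr_seq) (i : nat) : option instr :=
  if (0 < i) && (i <= size X) then Some (nth ITerm X i.-1) else None.

(* Terminating execution of X from counter i and state s, ending in state s',
   never executing a basic instruction with focus in:j, j > n.
   Deadlock (counter out of range, #0) has no derivation. *)
Inductive terminates (n : nat) (X : instr_seq) : nat -> state -> state -> Prop :=
  | T_term i s : fetch X i = Some ITerm -> terminates n X i s s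
  | T_jump i l s s' : fetch X i = Some (IJump l) -> 0 < l ->
      terminates n X (i + l) s s' -> terminates n X i s s'
  | T_plain i a s s' : fetch X i = Some (IPlain a) -> allowed n a ->
      terminates n X i.+1 (exec_basic a s).1 s' -> terminates n X i s s'
  | T_pos i a s s' : fetch X i = Some (IPos a) -> allowed n a ->
      terminates n X (if (exec_basic a s).2 then i.+1 else i.+2) (exec_basic a s).1 s' ->
      terminates n X i s s'
  | T_neg i a s s' : fetch X i = Some (INeg a) -> allowed n a ->
      terminates n X (if (exec_basic a s).2 then i.+2 else i.+1) (exec_basic a s).1 s' ->
      terminates n X i s s'.

Definition instr_basics (u : instr) : seq basic :=
  match u with IPlain a | IPos a | INeg a => [:: a] | _ => [::] end.

Definition br_basic (a : basic) : bool :=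
  match bfocus a, bmethod a with
  | FIn i, MGet => 0 < i
  | FAux i, _ => 0 < i
  | FOut, MSet _ => true
  | _, _ => false
  end.

Definition br_na_basic (a : basic) : bool :=
  match bfocus a, bmethod a with
  | FIn i, MGet => 0 < i
  | FOut, MSet _ => true
  | _, _ => false
  end.

Definition in_IS_br (X : instr_seq) : Prop :=
  nonempty_is X /\ all (fun u => all br_basic (instr_basics u)) X.

Definition in_IS_br_na (X : instr_seq) : Prop :=
  in_IS_br X /\ all (fun u => all br_na_basic (instr_basics u)) X.

Definition is_jump (u : instr) : bool := if u is IJump _ then true else false.
Definition jump_free (X : instr_seq) : Prop := ~~ has is_jump X.

(* Initial state: in:j holds b_j (j <= n, 1-based), aux:i and out hold F *)
Definition init_state (n : nat) (b : n.-tuple bool) : state :=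
  State (fun j => nth false b j.-1) (fun _ => false) false.

Definition computes (n : nat) (f : n.-tuple bool -> bool) (X : instr_seq) : Prop :=
  in_IS_br X /\
  forall b : n.-tuple bool, exists s',
    terminates n X 1 (init_state b) s' /\ rout s' = f b.

From mathcomp Require Import all_boot zify.

(* Every n-ary Boolean function is computed by a jump-free instruction
   sequence of IS_br^na of length 2^n * (2n + 3) <= 3 (n + 1) 2^n.

   The sequence is a table lookup: for each input tuple c it contains a block
     test(1,c_1); skip; ...; test(n,c_n); skip; emit f(c); skip; !
   where test(j,b) reads in:j and skips its successor iff in:j = b, skip is
   +out.set:F (it always skips its successor), and emit v sets out to v and
   skips its successor.  If the input matches c, the tests lead to emit f(c)
   and then to !.  At the first mismatching test, control falls onto a skip,
   and the chain of skips at the odd offsets of the block leads to the start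
   of the next block.  Since only out is ever written, the invariant is that
   from a given position every state with the given inputs, aux registers
   false and an arbitrary out terminates with a fixed out value ('yields'). *)

Definition in_get (j : nat) : basic := Basic (FIn j) MGet.

Definition test_in (j : nat) (b : bool) : instr :=
  if b then INeg (in_get j) else IPos (in_get j).

Definition skip : instr := IPos (Basic FOut (MSet false)).

Definition emit (v : bool) : instr :=
  if v then INeg (Basic FOut (MSet true)) else IPos (Basic FOut (MSet false)).

Fixpoint tests (k : nat) (bs : seq bool) : seq instr :=
  if bs is b :: bs' then test_in k.+1 b :: skip :: tests k.+1 bs' else [::].

Definition block (bs : seq bool) (v : bool) : seq instr :=
  tests 0 bs ++ [:: emit v; skip; ITerm].

Definition table {n} (f : n.-tuple bool -> bool) (s : seq (n.-tuple bool)) : seq instr :=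
  flatten [seq block (val c) (f c) | c <- s].

Lemma size_tests k bs : size (tests k bs) = (size bs).*2.
Proof. by elim: bs k => [|b bs IH] k //=; rewrite IH doubleS. Qed.

Lemma size_block bs v : size (block bs v) = (size bs).*2 + 3.
Proof. by rewrite size_cat size_tests. Qed.

Lemma nth_tests_test k bs i :
  i < size bs -> nth ITerm (tests k bs) i.*2 = test_in (k + i).+1 (nth false bs i).
Proof.
elim: bs k i => [|b bs IH] k [|i] //=; first by rewrite addn0.
by rewrite ltnS => /IH ->; rewrite addSnnS.
Qed.

Lemma nth_tests_skip k bs i :
  i < size bs -> nth ITerm (tests k bs) i.*2.+1 = skip.
Proof. by elim: bs k i => [|b bs IH] k [|i] //= /IH. Qed.

Lemma fetch_cat pre mid post j :
  j < size mid -> fetch (pre ++ mid ++ post) (size pre + j).+1 = Some (nth ITerm mid j).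
Proof.
move=> lt_j; rewrite /fetch !size_cat ifT; last by apply/andP; split; lia.
by rewrite nth_cat ltnNge leq_addr addKn /= nth_cat lt_j.
Qed.

Section Block.
Variables (pre : seq instr) (bs : seq bool) (v : bool) (post : seq instr).
Let X := pre ++ block bs v ++ post.
Let q := size pre.

Lemma fetch_block_test i :
  i < size bs -> fetch X (q + i.*2).+1 = Some (test_in i.+1 (nth false bs i)).
Proof.
move=> lt_i; rewrite fetch_cat ?size_block; last by rewrite -ltn_double in lt_i; lia.
by rewrite nth_cat size_tests ltn_double lt_i nth_tests_test.
Qed.

Lemma fetch_block_skip i :
  i <= size bs -> fetch X (q + i.*2.+1).+1 = Some skip.
Proof.
move=> le_i; rewrite fetch_cat ?size_block; last by rewrite -leq_double in le_i; lia.
rewrite nth_cat size_tests; case: (ltnP i (size bs)) => [lt_i | ge_i].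
- by rewrite ifT ?nth_tests_skip //; lia.
- have -> : i = size bs by lia.
  by rewrite ltnNge leqnSn subSn // subnn.
Qed.

Lemma fetch_block_emit : fetch X (q + (size bs).*2).+1 = Some (emit v).
Proof.
rewrite fetch_cat ?size_block; last by lia.
by rewrite nth_cat size_tests ltnn subnn.
Qed.

Lemma fetch_block_term : fetch X (q + (size bs).*2.+2).+1 = Some ITerm.
Proof.
rewrite fetch_cat ?size_block; last by lia.
by rewrite nth_cat size_tests ltnNge -addn2 leq_addr addKn.
Qed.

End Block.

Section Execution.
Variables (n : nat) (X : instr_seq) (rho : nat -> bool).

Definition yields (p : nat) (r : bool) : Prop :=
  forall o, exists s', terminates n X p (State rho (fun _ => false) o) s' /\ rout s' = r.

Lemma yields_skip p r : fetch X p = Some skip -> yields p.+2 r -> yields p r.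
Proof.
move=> fetch_p Y o; have [s' [T R]] := Y false.
by exists s'; split=> //; apply: (T_pos fetch_p I).
Qed.

Lemma yields_skips p m r :
  (forall i, i <= m -> fetch X (p + i.*2) = Some skip) ->
  yields (p + m.*2).+2 r -> yields p r.
Proof.
elim: m p => [|m IH] p skips Y;
  have skip_p : fetch X p = Some skip by have := skips 0 isT; rewrite addn0.
  by apply: yields_skip; rewrite // double0 addn0 in Y.
apply: yields_skip => //; apply: IH => [i le_im|].
- by rewrite (_ : p.+2 + i.*2 = p + i.+1.*2) ?skips //; lia.
- by rewrite (_ : p.+2 + m.*2 = p + m.+1.*2) //; lia.
Qed.

Lemma yields_test_match p j b r :
  j <= n -> rho j = b -> fetch X p = Some (test_in j b) -> yields p.+2 r -> yields p r.
Proof.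
move=> le_jn rho_j fetch_p Y o; have [s' [T R]] := Y o; exists s'; split=> //.
by case: b rho_j fetch_p => rho_j fetch_p;
  [apply: (T_neg fetch_p) | apply: (T_pos fetch_p)]; rewrite //= rho_j.
Qed.

Lemma yields_test_mismatch p j b r :
  j <= n -> rho j != b -> fetch X p = Some (test_in j b) -> yields p.+1 r -> yields p r.
Proof.
move=> le_jn /negPf rho_j fetch_p Y o; have [s' [T R]] := Y o; exists s'; split=> //.
have {}rho_j : rho j = ~~ b by move: rho_j; case: (rho j); case: (b).
by case: b rho_j fetch_p => rho_j fetch_p;
  [apply: (T_neg fetch_p) | apply: (T_pos fetch_p)]; rewrite //= rho_j.
Qed.

Lemma yields_emit p v :
  fetch X p = Some (emit v) -> fetch X p.+2 = Some ITerm -> yields p v.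
Proof.
move=> fetch_p fetch_term o; exists (State rho (fun _ => false) v); split=> //.
by case: v fetch_p => fetch_p;
  [apply: (T_neg fetch_p) | apply: (T_pos fetch_p)]; rewrite //=; apply: T_term.
Qed.

Section BlockRun.
Variables (pre : seq instr) (bs : seq bool) (v : bool) (post : seq instr).
Hypothesis X_def : X = pre ++ block bs v ++ post.
Hypothesis size_bs : size bs <= n.
Let q := size pre.

Definition agrees_below (j : nat) : Prop :=
  forall i, i < j -> rho i.+1 = nth false bs i.

Lemma yields_block_prefix {j r} :
  j <= size bs -> agrees_below j -> yields (q + j.*2).+1 r -> yields q.+1 r.
Proof.
elim: j => [|j IH] le_j agree Y; first by rewrite addn0 in Y.
apply: IH => [||]; first exact: ltnW.
  by move=> i lt_ij; apply: agree; apply: ltnW.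
apply: (yields_test_match _ j.+1 (nth false bs j)).
- exact: leq_trans size_bs.
- exact: agree.
- by rewrite X_def fetch_block_test.
- by rewrite doubleS !addnS in Y.
Qed.

Lemma yields_block_match : agrees_below (size bs) -> yields q.+1 v.
Proof.
move=> agree; apply: (yields_block_prefix (leqnn (size bs)) agree).
apply: yields_emit; rewrite X_def; first exact: fetch_block_emit.
by move: (fetch_block_term pre bs v post); rewrite !addnS.
Qed.

(* An input disagreeing with bs somewhere leaves the block: after the first
   failing test, the skips lead past the final instruction !. *)
Lemma yields_block_mismatch r :
  (exists2 i, i < size bs & rho i.+1 != nth false bs i) ->
  yields (q + size (block bs v)).+1 r -> yields q.+1 r.
Proof.
case=> i0 lt_i0 bad_i0 Y.
have ex_bad : exists i, (i < size bs) && (rho i.+1 != nth false bs i).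
  by exists i0; rewrite lt_i0.
case: (ex_minnP ex_bad) => i /andP[lt_i bad_i] first_bad.
have agree : agrees_below i.
  move=> k lt_ki; apply/eqP/negPn/negP => bad_k.
  by have := first_bad k; rewrite (ltn_trans lt_ki lt_i) bad_k leqNgt lt_ki => /(_ isT).
apply: (yields_block_prefix (ltnW lt_i) agree).
apply: (yields_test_mismatch _ i.+1 (nth false bs i)) => //.
- exact: leq_trans size_bs.
- by rewrite X_def fetch_block_test.
apply: (yields_skips _ (size bs - i)) => [k le_k|].
  rewrite X_def (_ : _ + k.*2 = (q + (i + k).*2.+1).+1); last by lia.
  by apply: fetch_block_skip; lia.
by rewrite size_block in Y; rewrite (_ : _.+2 = (q + ((size bs).*2 + 3)).+1) //; lia.
Qed.

End BlockRun.
End Execution.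

Lemma tuple_diff_nth {n} {b c : n.-tuple bool} :
  b != c -> exists2 i, i < n & nth false b i != nth false c i.
Proof.
move=> neq_bc; case: (boolP [exists i : 'I_n, tnth b i != tnth c i]).
  by case/existsP => i; rewrite !(tnth_nth false) => diff_i; exists i.
rewrite negb_exists => /forallP same; case/eqP: neq_bc.
by apply: eq_from_tnth => i; apply/eqP/negPn.
Qed.

Lemma yields_table {n} (f : n.-tuple bool -> bool) {X b} {s : seq (n.-tuple bool)} {pre} :
  X = pre ++ table f s -> b \in s -> yields n X (rin (init_state b)) (size pre).+1 (f b).
Proof.
elim: s pre => [|c s IH] pre //= X_def; rewrite inE.
have size_c : size (val c) <= n by rewrite size_tuple.
case: (eqVneq b c) => [-> _ | neq_bc /= b_in_s].
  by apply: yields_block_match; [exact: X_def | exact: size_c | move=> i _].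
apply: yields_block_mismatch; [exact: X_def | exact: size_c | |].
  by have [i lt_i diff] := tuple_diff_nth neq_bc; exists i; rewrite ?size_tuple.
by rewrite -size_cat; apply: IH; rewrite // X_def -catA.
Qed.

Lemma size_table {n} (f : n.-tuple bool -> bool) s :
  size (table f s) = size s * (n.*2 + 3).
Proof.
by elim: s => [|c s IH] //=; rewrite size_cat IH size_block size_tuple mulSn.
Qed.

Definition na_jump_free_instr (u : instr) : bool :=
  all br_na_basic (instr_basics u) && ~~ is_jump u.

Lemma table_na_jump_free {n} (f : n.-tuple bool -> bool) s :
  all na_jump_free_instr (table f s).
Proof.
have tests_ok k bs : all na_jump_free_instr (tests k bs).
  by elim: bs k => [|b bs IH] k //=; rewrite IH; case: b.
elim: s => [|c s IH] //=; rewrite all_cat IH all_cat tests_ok.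
by case: (f c).
Qed.

Lemma br_na_basic_br a : br_na_basic a -> br_basic a.
Proof. by case: a => [[i||] [b|]]. Qed.

Theorem corollary1 :
  exists c : nat, forall (n : nat) (f : n.-tuple bool -> bool),
    exists X : instr_seq,
      in_IS_br_na X /\ jump_free X /\ computes f X /\
      size X <= c * (n + 1) * 2 ^ n.
Proof.
exists 3 => n f; set X := table f (enum {: n.-tuple bool}).
have size_X : size X = 2 ^ n * (n.*2 + 3).
  by rewrite size_table -cardE card_tuple card_bool.
have nonempty_X : nonempty_is X.
  by move=> X_nil; move: size_X; rewrite X_nil => /esym/eqP; rewrite muln_eq0 expn_eq0 addn3.
have na_jf_X : all na_jump_free_instr X := table_na_jump_free f _.
have na_X : all (fun u => all br_na_basic (instr_basics u)) X.
  by apply: (sub_all _ na_jf_X) => u /andP[].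
have br_X : in_IS_br X.
  split=> //; apply: (sub_all _ na_X) => u; apply: sub_all; exact: br_na_basic_br.
exists X; split; [by [] | split; [|split]].
- by rewrite /jump_free -all_predC; apply: (sub_all _ na_jf_X) => u /andP[].
- split=> // b; have := yields_table f (erefl : X = [::] ++ X) (mem_enum _ b).
  by move=> /(_ false).
- by rewrite size_X; lia.
Qed.
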